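(* Let $a\in\mathbb{R}$, $b\in(a,\infty)$, let $p\in C([a,b],[0,\infty))$ be strictly increasing, let $g\in C([a,b],\mathbb{R})$ and $L\in(0,\infty)$ satisfy for all $x,y\in[a,b]$ with $x<y$ that $g(y)-g(x)>3L(y-x)$, and assume $\int_a^bg(x)p(x)\,\mathrm{d}x=0$. Then $L\int_a^bp(x)\,\mathrm{d}x<g(b)p(b)$. *)

From Stdlib Require Export Reals.
From Coquelicot Require Export Coquelicot.

From Stdlib Require Import Psatz.
Open Scope R_scope.

(* Put P = RInt p and K = RInt (b - x) p(x).  Integrating the slope bound
   g(b) - g(x) >= 3L(b - x) against p and using RInt g p = 0 gives
   3LK <= g(b) P.  As p is nondecreasing, its mass P lies at least as far from b
   as the same mass spread with the maximal density p(b) on [b - P/p(b), b],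
   so K >= P^2 / (2 p(b)).  Hence 3LP <= 2 p(b) g(b), and P > 0 makes this
   strictly stronger than the claim. *)

(* Composing with the clamp extends a function continuous on [a, b] to a
   function continuous on R, to which Coquelicot's integration lemmas apply. *)
Definition Rclamp (a b x : R) : R := Rmax a (Rmin x b).

Lemma Rclamp_in a b x : a <= b -> a <= Rclamp a b x <= b.
Proof. intros hab. unfold Rclamp, Rmax, Rmin. repeat destruct Rle_dec; lra. Qed.

Lemma Rclamp_id a b x : a <= x <= b -> Rclamp a b x = x.
Proof. intros hx. unfold Rclamp, Rmax, Rmin. repeat destruct Rle_dec; lra. Qed.

Lemma Rclamp_dist a b x y : a <= b -> Rabs (Rclamp a b y - Rclamp a b x) <= Rabs (y - x).
Proof.
  intros hab. unfold Rclamp, Rmax, Rmin.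
  repeat destruct Rle_dec; unfold Rabs; repeat destruct Rcase_abs; lra.
Qed.

Lemma continuous_Rclamp_comp a b (f : R -> R) x :
  a <= b -> continuous_on (fun t => a <= t <= b) f ->
  continuous (fun t => f (Rclamp a b t)) x.
Proof.
  intros hab hf.
  apply (filterlim_comp _ _ _ (Rclamp a b) f _
           (within (fun t => a <= t <= b) (locally (Rclamp a b x)))).
  - intros P [eps HP]. exists eps. intros y hy.
    apply HP; [|apply Rclamp_in; exact hab].
    apply (Rle_lt_trans _ (Rabs (y - x))); [apply Rclamp_dist; exact hab | exact hy].
  - apply hf, Rclamp_in; exact hab.
Qed.

Lemma ex_RInt_continuous_on a b (f : R -> R) :
  a <= b -> continuous_on (fun x => a <= x <= b) f -> ex_RInt f a b.
Proof.
  intros hab hf.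
  apply (ex_RInt_ext (fun x => f (Rclamp a b x))).
  - intros x hx. rewrite Rmin_left, Rmax_right in hx by exact hab.
    rewrite Rclamp_id by lra. reflexivity.
  - apply (@ex_RInt_continuous R_CompleteNormedModule). intros z _.
    now apply continuous_Rclamp_comp.
Qed.

Lemma RInt_gt_0_continuous_on a b (f : R -> R) :
  a < b -> continuous_on (fun x => a <= x <= b) f ->
  (forall x, a < x < b -> 0 < f x) -> 0 < RInt f a b.
Proof.
  intros hab hf hpos.
  rewrite (RInt_ext f (fun x => f (Rclamp a b x))).
  - apply RInt_gt_0; [exact hab| |].
    + intros x hx. rewrite Rclamp_id by lra. now apply hpos.
    + intros x _. apply continuous_Rclamp_comp; [lra | exact hf].
  - intros x hx. rewrite Rmin_left, Rmax_right in hx by lra.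
    rewrite Rclamp_id by lra. reflexivity.
Qed.

Lemma continuous_on_mult {T : UniformSpace} (D : T -> Prop) (f g : T -> R) :
  continuous_on D f -> continuous_on D g -> continuous_on D (fun x => f x * g x).
Proof.
  intros hf hg x Dx.
  exact (filterlim_comp_2 f g mult (hf x Dx) (hg x Dx) (@filterlim_mult R_AbsRing (f x) (g x))).
Qed.

Lemma continuous_on_sub_id_mult (D : R -> Prop) (c : R) (f : R -> R) :
  continuous_on D f -> continuous_on D (fun x => (c - x) * f x).
Proof.
  intros hf. apply continuous_on_mult; [|exact hf].
  apply continuous_on_forall. intros x _.
  apply (@ex_derive_continuous R_AbsRing R_NormedModule). auto_derive. auto.
Qed.

Lemma is_RInt_lincomb a b (f h : R -> R) (u v : R) : ex_RInt f a b -> ex_RInt h a b ->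
  is_RInt (fun x => u * f x + v * h x) a b (u * RInt f a b + v * RInt h a b).
Proof.
  intros ef eh.
  exact (@is_RInt_plus R_NormedModule (fun x => scal u (f x)) (fun x => scal v (h x)) a b _ _
    (is_RInt_scal f a b u _ (RInt_correct f a b ef))
    (is_RInt_scal h a b v _ (RInt_correct h a b eh))).
Qed.

Lemma RInt_lincomb a b (f h : R -> R) (u v : R) : ex_RInt f a b -> ex_RInt h a b ->
  RInt (fun x => u * f x + v * h x) a b = u * RInt f a b + v * RInt h a b.
Proof. intros ef eh. apply is_RInt_unique, is_RInt_lincomb; assumption. Qed.

Lemma RInt_scal_sub_id (M c d : R) : RInt (fun x => M * (c - x)) c d = - (M * (d - c) ^ 2 / 2).
Proof.
  apply is_RInt_unique.
  replace (- (M * (d - c) ^ 2 / 2))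
    with (minus ((fun x => - (M * (c - x) ^ 2 / 2)) d) ((fun x => - (M * (c - x) ^ 2 / 2)) c))
    by (unfold minus, plus, opp; simpl; field).
  apply (is_RInt_derive (fun x => - (M * (c - x) ^ 2 / 2))).
  - intros x _. auto_derive; [exact I | field].
  - intros x _. apply (@ex_derive_continuous R_AbsRing R_NormedModule). auto_derive. exact I.
Qed.

Section NondecreasingDensity.

Variables (a b : R) (p : R -> R).
Hypothesis hab : a <= b.
Hypothesis hpc : continuous_on (fun x => a <= x <= b) p.
Hypothesis hp0 : forall x, a <= x <= b -> 0 <= p x.
Hypothesis hpmono : forall x y, a <= x -> x <= y -> y <= b -> p x <= p y.

Lemma RInt_le_length_mul_right : RInt p a b <= (b - a) * p b.
Proof.
  apply (Rle_trans _ (Rabs (RInt p a b))); [apply Rle_abs|].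
  apply abs_RInt_le_const; [exact hab | now apply ex_RInt_continuous_on |].
  intros x hx. rewrite Rabs_pos_eq by now apply hp0. apply hpmono; lra.
Qed.

Lemma RInt_shifted_moment_ge w : 0 <= w <= b - a ->
  - (p b * w ^ 2 / 2) <= RInt (fun x => (b - w - x) * p x) a b.
Proof.
  (* (c - x) p x is nonnegative left of c and at least p b (c - x) right of it. *)
  intros hw. set (c := b - w). set (j := fun x => (c - x) * p x).
  assert (hj : forall u v, a <= u -> u <= v -> v <= b -> ex_RInt j u v).
  { intros u v hu huv hv. apply ex_RInt_continuous_on; [exact huv|].
    apply (continuous_on_subset (fun x => a <= x <= b)); [intros; lra|].
    now apply continuous_on_sub_id_mult. }
  rewrite <- (RInt_Chasles j a c b) by (apply hj; unfold c; lra).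
  assert (left_part : 0 <= RInt j a c).
  { apply RInt_ge_0; [unfold c; lra | apply hj; unfold c; lra |].
    intros x hx. apply Rmult_le_pos; [lra | apply hp0; unfold c in hx; lra]. }
  assert (right_part : RInt (fun x => p b * (c - x)) c b <= RInt j c b).
  { apply RInt_le; [unfold c; lra | apply ex_RInt_continuous_on | apply hj; unfold c; lra |].
    - unfold c; lra.
    - apply continuous_on_forall; intros x _.
      apply (@ex_derive_continuous R_AbsRing R_NormedModule). auto_derive. exact I.
    - intros x hx. unfold j.
      assert (p x <= p b) by (apply hpmono; unfold c in hx; lra).
      unfold c in *; nra. }
  rewrite RInt_scal_sub_id in right_part.
  replace (b - c) with w in right_part by (unfold c; ring).
  change (plus (RInt j a c) (RInt j c b)) with (RInt j a c + RInt j c b). lra.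
Qed.

Lemma RInt_sq_le_moment :
  RInt p a b ^ 2 <= 2 * p b * RInt (fun x => (b - x) * p x) a b.
Proof.
  set (P := RInt p a b). set (K := RInt (fun x => (b - x) * p x) a b).
  assert (hP0 : 0 <= P).
  { apply RInt_ge_0; [exact hab | now apply ex_RInt_continuous_on |].
    intros; apply hp0; lra. }
  assert (hPb : P <= (b - a) * p b) by apply RInt_le_length_mul_right.
  assert (hpb : 0 <= p b) by (apply hp0; lra).
  destruct hpb as [hpb | hpb].
  2: { rewrite <- hpb in hPb |- *. replace P with 0 by lra. lra. }
  set (w := P / p b).
  assert (hwP : p b * w = P) by (unfold w; field; lra).
  assert (hw : 0 <= w <= b - a).
  { split; [unfold w; apply Rdiv_le_0_compat; lra|]. nra. }
  pose proof (RInt_shifted_moment_ge w hw) as hshift.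
  rewrite (RInt_ext _ (fun x => 1 * ((b - x) * p x) + (- w) * p x)) in hshift
    by (intros; simpl; ring).
  rewrite RInt_lincomb in hshift.
  - fold P K in hshift. nra.
  - apply ex_RInt_continuous_on; [exact hab|]. now apply continuous_on_sub_id_mult.
  - now apply ex_RInt_continuous_on.
Qed.

End NondecreasingDensity.

Lemma RInt_mul_le_of_slope a b s (g p : R -> R) :
  a <= b ->
  continuous_on (fun x => a <= x <= b) g -> continuous_on (fun x => a <= x <= b) p ->
  (forall x, a <= x <= b -> 0 <= p x) ->
  (forall x, a <= x <= b -> s * (b - x) <= g b - g x) ->
  RInt (fun x => g x * p x) a b
    <= g b * RInt p a b - s * RInt (fun x => (b - x) * p x) a b.
Proof.
  intros hab hgc hpc hp0 hs.
  assert (ep : ex_RInt p a b) by now apply ex_RInt_continuous_on.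
  assert (ek : ex_RInt (fun x => (b - x) * p x) a b)
    by (apply ex_RInt_continuous_on; [exact hab | now apply continuous_on_sub_id_mult]).
  replace (g b * RInt p a b - s * RInt (fun x => (b - x) * p x) a b)
    with (RInt (fun x => g b * p x + (- s) * ((b - x) * p x)) a b)
    by (rewrite RInt_lincomb by assumption; simpl; ring).
  apply RInt_le; [exact hab | apply ex_RInt_continuous_on; [exact hab | now apply continuous_on_mult] | |].
  - eexists. apply is_RInt_lincomb; assumption.
  - intros x hx.
    assert (0 <= (g b - g x - s * (b - x)) * p x)
      by (apply Rmult_le_pos; [pose proof (hs x); lra | apply hp0; lra]).
    lra.
Qed.

Theorem lemma2p8 (a b L : R) (p g : R -> R)
  (hab : a < b)
  (hpc : continuous_on (fun x => a <= x <= b) p)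
  (hp0 : forall x, a <= x <= b -> 0 <= p x)
  (hpinc : forall x y, a <= x -> x < y -> y <= b -> p x < p y)
  (hgc : continuous_on (fun x => a <= x <= b) g)
  (hL : 0 < L)
  (hg : forall x y, a <= x -> x < y -> y <= b -> g y - g x > 3 * L * (y - x))
  (hint : RInt (fun x => g x * p x) a b = 0) :
  L * RInt p a b < g b * p b.
Proof.
  assert (hpmono : forall x y, a <= x -> x <= y -> y <= b -> p x <= p y).
  { intros x y hx [hxy | <-] hy; [apply Rlt_le, hpinc |]; lra. }
  assert (hP : 0 < RInt p a b).
  { apply RInt_gt_0_continuous_on; [exact hab | exact hpc |].
    intros x hx. apply (Rle_lt_trans _ (p a)); [apply hp0 | apply hpinc]; lra. }
  assert (hpb : 0 < p b) by (apply (Rle_lt_trans _ (p a)); [apply hp0 | apply hpinc]; lra).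
  assert (hslope := RInt_mul_le_of_slope a b (3 * L) g p).
  assert (hmoment := RInt_sq_le_moment a b p).
  rewrite hint in hslope.
  set (P := RInt p a b) in *. set (K := RInt (fun x => (b - x) * p x) a b) in *.
  assert (h3K : 3 * L * K <= g b * P).
  { apply Rminus_le_0. apply hslope; [lra | exact hgc | exact hpc | exact hp0 |].
    intros x hx. destruct (Rle_lt_or_eq_dec x b) as [hxb | ->]; [lra | | lra].
    apply Rlt_le, Rgt_lt, hg; lra. }
  assert (h2K : P ^ 2 <= 2 * p b * K) by (apply hmoment; [lra | exact hpc | exact hp0 | exact hpmono]).
  assert (hgP : 3 * L * P <= 2 * p b * g b) by nra.
  nra.
Qed.
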